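(* Let $G$ be a connected split graph with no universal vertex. Then the cutset hypergraph of $G$ equals the neighborhood hypergraph of $G$; that is, a set $S\subseteq V(G)$ is a minimal cutset of $G$ if and only if $S$ is an inclusion-wise minimal member of the family $\{N(v):v\in V(G)\}$.
   Context: A graph is split if its vertex set can be partitioned into a clique and an independent set. A universal vertex is a vertex adjacent to all other vertices. $N(v)$ denotes the (open) neighborhood of $v$. A cutset of $G$ is a set $S\subseteq V(G)$ such that $G-S$ is disconnected; it is minimal if it contains no other cutset. The cutset hypergraph of $G$ has vertex set $V(G)$ and hyperedges the minimal cutsets; the neighborhood hypergraph of $G$ has vertex set $V(G)$ and hyperedges the inclusion-wise minimal sets in $\{N(v):v\in V(G)\}$. *)

From mathcomp Require Import all_boot.
Set Implicit Arguments. Unset Strict Implicit. Unset Printing Implicit Defensive.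

Definition simple_graph (T : finType) (e : rel T) : Prop :=
  symmetric e /\ irreflexive e.

Definition del_rel (T : finType) (e : rel T) (S : {set T}) : rel T :=
  fun x y => [&& x \notin S, y \notin S & e x y].

Definition connected_graph (T : finType) (e : rel T) : Prop :=
  (0 < #|T|) /\ forall x y : T, connect e x y.

Definition is_cutset (T : finType) (e : rel T) (S : {set T}) : Prop :=
  exists x y : T, [/\ x \notin S, y \notin S & ~~ connect (del_rel e S) x y].

Definition is_min_cutset (T : finType) (e : rel T) (S : {set T}) : Prop :=
  is_cutset e S /\ forall S' : {set T}, S' \proper S -> ~ is_cutset e S'.

Definition nbhd (T : finType) (e : rel T) (v : T) : {set T} := [set u | e v u].

Definition is_min_nbhd (T : finType) (e : rel T) (S : {set T}) : Prop :=
  (exists v : T, S = nbhd e v) /\ forall w : T, ~ (nbhd e w \proper S).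

Definition is_clique (T : finType) (e : rel T) (K : {set T}) : Prop :=
  forall x y, x \in K -> y \in K -> x != y -> e x y.

Definition is_independent (T : finType) (e : rel T) (I : {set T}) : Prop :=
  forall x y, x \in I -> y \in I -> ~~ e x y.

Definition split_graph (T : finType) (e : rel T) : Prop :=
  exists K I : {set T},
    [/\ K :&: I = set0, K :|: I = setT, is_clique e K & is_independent e I].

Definition universal (T : finType) (e : rel T) (v : T) : Prop :=
  forall u, u != v -> e v u.

From mathcomp Require Import all_boot.
Set Implicit Arguments. Unset Strict Implicit. Unset Printing Implicit Defensive.

(* Every neighbourhood N(v) of a non-universal vertex is a cutset: it separates
   v from any vertex u <> v not adjacent to v. Conversely, in a split graph
   with clique K and independent set I, the vertices of K outside a set S stay
   mutually adjacent, and a vertex of I outside S with a neighbour outside S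
   reaches K \ S in one step. So if S separates x from y, one of N(x), N(y)
   lies inside S. Hence cutsets and neighbourhoods are mutually cofinal under
   inclusion, and their minimal members coincide. *)

Section NeighbourhoodCutset.
Variables (T : finType) (e : rel T).
Hypothesis e_irr : irreflexive e.

Lemma not_universalP v : ~ universal e v -> exists2 u, u != v & ~~ e v u.
Proof.
move=> nu; have /existsP [u] : [exists u, (u != v) && ~~ e v u].
  apply: contraT; rewrite negb_exists => /forallP all_adj.
  by case: nu => u uv; move: (all_adj u); rewrite uv negbK.
by case/andP=> uv nvu; exists u.
Qed.

Lemma nbhd_cutset v : ~ universal e v -> is_cutset e (nbhd e v).
Proof.
case/not_universalP=> u uv nvu; exists v, u.
split; rewrite ?inE ?e_irr //; apply/negP => /connectP [[|z p] /=].
  by move=> _ uv'; rewrite uv' eqxx in uv.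
by case/andP=> /and3P [_ /negP zN vz]; rewrite inE vz in zN.
Qed.

End NeighbourhoodCutset.

Section SplitCutset.
Variables (T : finType) (e : rel T) (K I : {set T}).
Hypotheses (e_sym : symmetric e) (KI_cover : K :|: I = setT).
Hypotheses (K_clique : is_clique e K) (I_indep : is_independent e I).

Lemma del_rel_sym (S : {set T}) : symmetric (del_rel e S).
Proof. by move=> x y; rewrite /del_rel e_sym; case: (x \in S); case: (y \in S). Qed.

Lemma connect_del_clique (S : {set T}) a b : a \in K -> b \in K -> a \notin S -> b \notin S ->
  connect (del_rel e S) a b.
Proof.
move=> aK bK aS bS; have [-> | ab] := eqVneq a b; first exact: connect0.
by apply: connect1; rewrite /del_rel aS bS K_clique.
Qed.

Lemma connect_del_to_clique (S : {set T}) z : z \notin S -> ~~ (nbhd e z \subset S) ->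
  exists2 a, (a \in K) && (a \notin S) & connect (del_rel e S) z a.
Proof.
move=> zS /subsetPn [u]; rewrite inE => zu uS.
have inKI w : (w \in K) || (w \in I) by rewrite -in_setU KI_cover inE.
case/orP: (inKI z) => zK; first by exists z; rewrite ?zK ?zS ?connect0.
case/orP: (inKI u) => uK; last by move: (I_indep zK uK); rewrite zu.
by exists u; rewrite ?uK ?uS //; apply: connect1; rewrite /del_rel zS uS zu.
Qed.

Lemma cutset_sup_nbhd (S : {set T}) : is_cutset e S -> exists w, nbhd e w \subset S.
Proof.
case=> x [y [xS yS nxy]].
have [Nx | /(connect_del_to_clique xS) [a /andP [aK aS] xa]] :=
  boolP (nbhd e x \subset S); first by exists x.
have [Ny | /(connect_del_to_clique yS) [b /andP [bK bS] yb]] :=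
  boolP (nbhd e y \subset S); first by exists y.
case/negP: nxy; apply: connect_trans xa _.
apply: connect_trans (connect_del_clique aK bK aS bS) _.
by rewrite (sym_connect_sym (@del_rel_sym S)).
Qed.

End SplitCutset.

Section MinimalCofinal.
Variables (T : finType) (e : rel T).
Hypothesis nbhd_cut : forall v, is_cutset e (nbhd e v).
Hypothesis cut_nbhd : forall S : {set T}, is_cutset e S -> exists w, nbhd e w \subset S.

Lemma min_cutset_min_nbhd (S : {set T}) : is_min_cutset e S -> is_min_nbhd e S.
Proof.
case=> cutS minS; have [w NwS] := cut_nbhd cutS.
split=> [|v NvS]; last exact: minS NvS (nbhd_cut v).
exists w; apply/eqP; rewrite eq_sym eqEproper NwS /=.
by apply/negP => SNw; apply: minS SNw (nbhd_cut w).
Qed.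

Lemma min_nbhd_min_cutset (S : {set T}) : is_min_nbhd e S -> is_min_cutset e S.
Proof.
case=> [[v ->] minN]; split=> [|S' S'N /cut_nbhd [w NwS']]; first exact: nbhd_cut.
exact: minN w (sub_proper_trans NwS' S'N).
Qed.

End MinimalCofinal.

Theorem mainTheorem4 (T : finType) (e : rel T) :
  simple_graph e -> connected_graph e -> split_graph e ->
  (forall v : T, ~ universal e v) ->
  forall S : {set T}, is_min_cutset e S <-> is_min_nbhd e S.
Proof.
move=> [e_sym e_irr] _ [K [I [_ KI_cover K_clique I_indep]]] no_universal S.
have nbhd_cut v := nbhd_cutset e_irr (no_universal v).
have cut_nbhd := cutset_sup_nbhd e_sym KI_cover K_clique I_indep.
split; [exact: min_cutset_min_nbhd | exact: min_nbhd_min_cutset].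
Qed.
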